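(* Let $u\in[0,2\pi)$ and $v\in[0,\pi)$. Define $$K_1=\cos\tfrac v2\cos\tfrac u2\,\mathbb{1}+\sin\tfrac v2\sin\tfrac u2\,\sigma_3,\qquad K_2=\sin\tfrac v2\cos\tfrac u2\,\sigma_1+i\cos\tfrac v2\sin\tfrac u2\,\sigma_2,$$ where $\sigma_1,\sigma_2,\sigma_3$ are the Pauli matrices. Let $\Phi^*(\sigma)=K_1^\dagger\sigma K_1+K_2^\dagger\sigma K_2$ for Hermitian $2\times2$ matrices $\sigma$. Let $\sigma^A,\sigma^B$ be diagonal Hermitian $2\times 2$ matrices. If $$F=C^Q-\sigma^A\otimes\mathbb{1}_2-\mathbb{1}_2\otimes\sigma^B\ge0,$$ then also $$F^\Phi=C^Q-\Phi^*(\sigma^A)\otimes\mathbb{1}_2-\mathbb{1}_2\otimes\Phi^*(\sigma^B)\ge0.$$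
   Context: Here $C^Q=\tfrac12(\mathbb{1}-S)$ on $\mathbb{C}^2\otimes\mathbb{C}^2$, where $S(|x\rangle|y\rangle)=|y\rangle|x\rangle$ is the swap operator. The operators $K_1,K_2$ satisfy $K_1^\dagger K_1+K_2^\dagger K_2=\mathbb{1}$, so they are the Kraus operators of a single-qubit CPTP map $\Phi(\rho)=K_1\rho K_1^\dagger+K_2\rho K_2^\dagger$, and $\Phi^*$ is its dual map. ''$\ge0$'' means positive semidefinite. *)

From HB Require Import structures.
From mathcomp Require Import all_boot all_order all_algebra.
From mathcomp Require Import reals trigo.
From mathcomp Require Import complex mxtens.

Set Implicit Arguments.
Unset Strict Implicit.
Unset Printing Implicit Defensive.

Import Order.TTheory GRing.Theory Num.Theory.
Local Open Scope ring_scope.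

Section Defs.
Variable R : realType.
Local Notation C := R[i].

Definition dagger {m n} (A : 'M[C]_(m, n)) : 'M[C]_(n, m) := (map_mx Num.conj A)^T.

Definition herm {n} (A : 'M[C]_n) : Prop := dagger A = A.

Definition psd {n} (A : 'M[C]_n) : Prop :=
  herm A /\ forall x : 'cV[C]_n, 0 <= (dagger x *m A *m x) 0 0.

Definition id2 : 'M[C]_2 := 1%:M.

Definition sigma1 : 'M[C]_2 :=
  \matrix_(i < 2, j < 2) (if (i != j :> nat) then 1 else 0).
Definition sigma2 : 'M[C]_2 :=
  \matrix_(i < 2, j < 2)
    (if ((i : nat) == 0%N) && ((j : nat) == 1%N) then - 'i
     else if ((i : nat) == 1%N) && ((j : nat) == 0%N) then 'i else 0).
Definition sigma3 : 'M[C]_2 :=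
  \matrix_(i < 2, j < 2)
    (if (i == j :> nat) then (if (i : nat) == 0%N then 1 else -1) else 0).

Definition swap2 : 'M[C]_(2 * 2) :=
  \matrix_(i, j) (if ((mxtens_unindex i).1 == (mxtens_unindex j).2) &&
                     ((mxtens_unindex i).2 == (mxtens_unindex j).1) then 1 else 0).

Definition CQ : 'M[C]_(2 * 2) := 2^-1 *: (1%:M - swap2).

Definition K1 (u v : R) : 'M[C]_2 :=
  (cos (v / 2) * cos (u / 2))%:C%C *: id2 + (sin (v / 2) * sin (u / 2))%:C%C *: sigma3.
Definition K2 (u v : R) : 'M[C]_2 :=
  (sin (v / 2) * cos (u / 2))%:C%C *: sigma1
  + ('i * (cos (v / 2) * sin (u / 2))%:C%C) *: sigma2.

Definition PhiStar (u v : R) (s : 'M[C]_2) : 'M[C]_2 :=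
  dagger (K1 u v) *m s *m K1 u v + dagger (K2 u v) *m s *m K2 u v.

End Defs.

From HB Require Import structures.
From mathcomp Require Import all_boot all_order all_algebra.
From mathcomp Require Import reals trigo.
From mathcomp Require Import complex mxtens.
From mathcomp Require Import ring.
Import Order.TTheory GRing.Theory Num.Theory.
Local Open Scope ring_scope.
Set Implicit Arguments. Unset Strict Implicit.

(* On diagonal matrices the dual channel acts by
   Phi*(diag(a0, a1)) = diag(p a0 + (1-p) a1, q a1 + (1-q) a0),
   with p = cos^2((v-u)/2) and q = cos^2((v+u)/2). For diagonal sigma^A, sigma^B the
   quadratic form Q of F only couples z01 and z10, and the form of F^Phi splits as
     pq Q(z00, z01, z10, z11) + (1-p)(1-q) Q(z11, z10, z01, z00)
     + p(1-q) [d0 |z|^2 + |z01 - z10|^2 / 2] + (1-p)q [d1 |z|^2 + |z01 - z10|^2 / 2],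
   where d0 = -(a0+b0) = Q(|00>) and d1 = -(a1+b1) = Q(|11>). Every term is
   nonnegative as soon as F >= 0. *)

Lemma big_ord2 (V : nmodType) (F : 'I_2 -> V) : \sum_(i < 2) F i = F ord0 + F ord_max.
Proof. by rewrite !big_ord_recl big_ord0 addr0; congr (_ + F _); apply: val_inj. Qed.

Lemma sum_mxtens_index (V : nmodType) m n (F : 'I_(m * n) -> V) :
  \sum_(k < m * n) F k = \sum_(i < m) \sum_(j < n) F (mxtens_index (i, j)).
Proof.
rewrite pair_big (reindex (@mxtens_index m n)) /=; last first.
  apply: onW_bij; exists (@mxtens_unindex m n).
    exact: mxtens_indexK.
  exact: mxtens_unindexK.
by apply: eq_bigr => -[i j].
Qed.

Section TwoQubits.
Variable R : realType.
Local Notation C := R[i].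
Local Notation idx := (@mxtens_index 2 2).

Lemma daggerE m n (M : 'M[C]_(m, n)) i j : dagger M i j = Num.conj (M j i).
Proof. by rewrite !mxE. Qed.

Lemma dagger_mulmx_mulmxE n (M : 'M[C]_n) (x : 'cV[C]_n) :
  (dagger x *m M *m x) 0 0 = \sum_a \sum_b Num.conj (x a 0) * M a b * x b 0.
Proof.
rewrite mxE exchange_big /=; apply: eq_bigr => b _.
by rewrite mxE big_distrl /=; apply: eq_bigr => a _; rewrite !mxE.
Qed.

Lemma conj_real_complex (x : R) : Num.conj (x%:C%C : C) = x%:C%C.
Proof. exact: conjc_real. Qed.

Definition mx2 (a b c d : C) : 'M[C]_2 :=
  \matrix_(i, j) if (i : nat) == 0%N then (if (j : nat) == 0%N then a else b)
                 else (if (j : nat) == 0%N then c else d).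

Local Notation diag2 a b := (mx2 a 0 0 b).

Lemma ord2P (i : 'I_2) : i = ord0 \/ i = ord_max.
Proof. by case: i => [[|[|m]] lt_i2]; [left | right | by []]; apply: val_inj. Qed.

Lemma mx2_eta (M : 'M[C]_2) :
  M = mx2 (M ord0 ord0) (M ord0 ord_max) (M ord_max ord0) (M ord_max ord_max).
Proof.
apply/matrixP => i j; rewrite mxE.
by case: (ord2P i) => ->; case: (ord2P j) => ->.
Qed.

Lemma mx2_mul a b c d e f g h :
  mx2 a b c d *m mx2 e f g h =
  mx2 (a * e + b * g) (a * f + b * h) (c * e + d * g) (c * f + d * h).
Proof.
apply/matrixP => i j; rewrite !mxE big_ord2 !mxE.
by case: (ord2P i) => ->; case: (ord2P j) => ->.
Qed.

Lemma mx2_add a b c d e f g h :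
  mx2 a b c d + mx2 e f g h = mx2 (a + e) (b + f) (c + g) (d + h).
Proof.
apply/matrixP => i j; rewrite !mxE.
by case: (ord2P i) => ->; case: (ord2P j) => ->.
Qed.

Lemma mx2_dagger a b c d :
  dagger (mx2 a b c d) = mx2 (Num.conj a) (Num.conj c) (Num.conj b) (Num.conj d).
Proof.
apply/matrixP => i j; rewrite !mxE.
by case: (ord2P i) => ->; case: (ord2P j) => ->.
Qed.

Lemma mx2_id2_sigma3 (c1 c2 : C) :
  c1 *: id2 R + c2 *: sigma3 R = diag2 (c1 + c2) (c1 - c2).
Proof.
apply/matrixP => i j; rewrite !mxE.
by case: (ord2P i) => ->; case: (ord2P j) => -> /=;
  rewrite ?mulr1 ?mulr0 ?addr0 ?add0r ?mulrN ?mulr1.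
Qed.

Lemma mx2_sigma1_sigma2 (c3 c4 : C) :
  c3 *: sigma1 R + ('i * c4) *: sigma2 R = mx2 0 (c3 + c4) (c3 - c4) 0.
Proof.
apply/matrixP => i j; rewrite !mxE.
case: (ord2P i) => ->; case: (ord2P j) => -> /=; rewrite ?mulr1 ?mulr0 ?addr0 ?add0r //.
  by rewrite mulrN mulrAC mulCii mulN1r opprK.
by rewrite mulrAC mulCii mulN1r.
Qed.

Lemma PhiStar_diag2 u v (s0 s1 : C) :
  PhiStar u v (diag2 s0 s1) =
  diag2 ((cos (v / 2 - u / 2) ^+ 2)%:C%C * s0 + (sin (v / 2 - u / 2) ^+ 2)%:C%C * s1)
        ((cos (v / 2 + u / 2) ^+ 2)%:C%C * s1 + (sin (v / 2 + u / 2) ^+ 2)%:C%C * s0).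
Proof.
rewrite /PhiStar /K1 /K2 mx2_id2_sigma3 mx2_sigma1_sigma2 -!rmorphD -!rmorphB.
rewrite !mx2_dagger !conj_real_complex rmorph0 !mx2_mul !mx2_add.
by rewrite cosB sinB cosD sinD !rmorphXn; congr mx2; ring.
Qed.

Definition Fmx (S T : 'M[C]_2) : 'M[C]_(2 * 2) := CQ R - S *t id2 R - id2 R *t T.

Lemma Fmx_entry (S T : 'M[C]_2) i j k l :
  Fmx S T (idx (i, j)) (idx (k, l)) =
  2^-1 * (((i == k) && (j == l))%:R - ((i == l) && (j == k))%:R)
  - S i k * (j == l)%:R - (i == k)%:R * T j l.
Proof.
rewrite !mxE !mxtens_indexK /= (inj_eq (can_inj (@mxtens_indexK 2 2))) xpair_eqE.
by case: ((i == l) && (j == k)).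
Qed.

Definition Fform (a0 a1 b0 b1 z00 z01 z10 z11 : C) : C :=
  - (a0 + b0) * (Num.conj z00 * z00) + (2^-1 - a0 - b1) * (Num.conj z01 * z01)
  + (2^-1 - a1 - b0) * (Num.conj z10 * z10)
  - 2^-1 * (Num.conj z01 * z10 + Num.conj z10 * z01) - (a1 + b1) * (Num.conj z11 * z11).

Lemma Fmx_diag2_form a0 a1 b0 b1 (x : 'cV[C]_(2 * 2)) :
  (dagger x *m Fmx (diag2 a0 a1) (diag2 b0 b1) *m x) 0 0 =
  Fform a0 a1 b0 b1 (x (idx (ord0, ord0)) 0) (x (idx (ord0, ord_max)) 0)
        (x (idx (ord_max, ord0)) 0) (x (idx (ord_max, ord_max)) 0).
Proof.
rewrite dagger_mulmx_mulmxE sum_mxtens_index !big_ord2 !sum_mxtens_index !big_ord2.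
by rewrite !Fmx_entry !mxE /= /Fform; ring.
Qed.

Lemma conj_diag2 a0 a1 : Num.conj a0 = a0 -> Num.conj a1 = a1 ->
  forall i k, Num.conj (diag2 a0 a1 k i) = diag2 a0 a1 i k.
Proof.
move=> ra0 ra1 i k; rewrite !mxE.
by case: (ord2P i) => ->; case: (ord2P k) => -> /=; rewrite ?ra0 ?ra1 ?rmorph0.
Qed.

Lemma Fmx_diag2_herm a0 a1 b0 b1 :
  Num.conj a0 = a0 -> Num.conj a1 = a1 -> Num.conj b0 = b0 -> Num.conj b1 = b1 ->
  herm (Fmx (diag2 a0 a1) (diag2 b0 b1)).
Proof.
move=> ra0 ra1 rb0 rb1; apply/matrixP => p q; rewrite daggerE.
case: (mxtens_indexP p) => i j; case: (mxtens_indexP q) => k l.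
rewrite !Fmx_entry !rmorphB !rmorphM rmorphB /=.
rewrite !rmorph_nat fmorphV rmorph_nat !conj_diag2 //.
by rewrite [k == i]eq_sym [l == j]eq_sym [k == j]eq_sym [l == i]eq_sym andbC
  [(j == k) && _]andbC.
Qed.

Lemma psd_Fmx_diag2_form a0 a1 b0 b1 :
  psd (Fmx (diag2 a0 a1) (diag2 b0 b1)) ->
  forall z00 z01 z10 z11, 0 <= Fform a0 a1 b0 b1 z00 z01 z10 z11.
Proof.
move=> [_ Fge0] z00 z01 z10 z11.
have := Fge0 (\col_k mx2 z00 z01 z10 z11 (mxtens_unindex k).1 (mxtens_unindex k).2).
by rewrite Fmx_diag2_form !mxE !mxtens_indexK.
Qed.

Definition cross_form (d z00 z01 z10 z11 : C) : C :=
  d * (Num.conj z00 * z00 + Num.conj z01 * z01 + Num.conj z10 * z10 + Num.conj z11 * z11)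
  + 2^-1 * (Num.conj (z01 - z10) * (z01 - z10)).

Lemma cross_form_ge0 d z00 z01 z10 z11 : 0 <= d -> 0 <= cross_form d z00 z01 z10 z11.
Proof.
move=> d_ge0; have normC_ge0 z : 0 <= Num.conj z * z :> C by rewrite mulrC mul_conjC_ge0.
by apply: addr_ge0; apply: mulr_ge0; rewrite ?normC_ge0 ?addr_ge0 ?invr_ge0 ?ler0n.
Qed.

Lemma Fform_mix (p q a0 a1 b0 b1 z00 z01 z10 z11 : C) :
  Fform (p * a0 + (1 - p) * a1) (q * a1 + (1 - q) * a0)
        (p * b0 + (1 - p) * b1) (q * b1 + (1 - q) * b0) z00 z01 z10 z11 =
  p * q * Fform a0 a1 b0 b1 z00 z01 z10 z11
  + (1 - p) * (1 - q) * Fform a0 a1 b0 b1 z11 z10 z01 z00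
  + p * (1 - q) * cross_form (- (a0 + b0)) z00 z01 z10 z11
  + (1 - p) * q * cross_form (- (a1 + b1)) z00 z01 z10 z11.
Proof. by rewrite /Fform /cross_form rmorphB; ring. Qed.

Lemma psd_Fmx_mix (p q : R) a0 a1 b0 b1 :
  0 <= p <= 1 -> 0 <= q <= 1 ->
  Num.conj a0 = a0 -> Num.conj a1 = a1 -> Num.conj b0 = b0 -> Num.conj b1 = b1 ->
  psd (Fmx (diag2 a0 a1) (diag2 b0 b1)) ->
  psd (Fmx (diag2 (p%:C%C * a0 + (1 - p)%:C%C * a1) (q%:C%C * a1 + (1 - q)%:C%C * a0))
           (diag2 (p%:C%C * b0 + (1 - p)%:C%C * b1) (q%:C%C * b1 + (1 - q)%:C%C * b0))).
Proof.
move=> p01 q01 ra0 ra1 rb0 rb1 Fpsd.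
have Fge0 := psd_Fmx_diag2_form Fpsd.
have weights_ge0 (r : R) : 0 <= r <= 1 -> 0 <= r%:C%C :> C /\ 0 <= 1 - r%:C%C :> C.
  move=> /andP[r_ge0 r_le1]; have -> : 1 - r%:C%C = (1 - r)%:C%C :> C.
    by rewrite rmorphB rmorph1.
  by rewrite !ler0c subr_ge0.
have [p_ge0 p'_ge0] := weights_ge0 p p01.
have [q_ge0 q'_ge0] := weights_ge0 q q01.
have d0_ge0 : 0 <= - (a0 + b0).
  by have := Fge0 1 0 0 0; rewrite /Fform rmorph0 rmorph1; congr (_ <= _); ring.
have d1_ge0 : 0 <= - (a1 + b1).
  by have := Fge0 0 0 0 1; rewrite /Fform rmorph0 rmorph1; congr (_ <= _); ring.
split.
  by apply: Fmx_diag2_herm; rewrite rmorphD !rmorphM /= !conj_real_complex ?ra0 ?ra1 ?rb0 ?rb1.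
move=> x; rewrite Fmx_diag2_form !rmorphB rmorph1 Fform_mix.
by rewrite !addr_ge0 //; apply: mulr_ge0; rewrite ?Fge0 ?cross_form_ge0 ?mulr_ge0.
Qed.

Lemma diag_mx2 (S : 'M[C]_2) : is_diag_mx S -> S = diag2 (S ord0 ord0) (S ord_max ord_max).
Proof.
move=> /is_diag_mxP S_diag.
by rewrite {1}(mx2_eta S) (S_diag ord0 ord_max) // (S_diag ord_max ord0).
Qed.

Lemma herm_conj_diag n (S : 'M[C]_n) i : herm S -> Num.conj (S i i) = S i i.
Proof. by move=> Sh; rewrite -{2}Sh daggerE. Qed.

End TwoQubits.

Theorem lemma5p1 (R : realType) (u v : R)
  (hu0 : 0 <= u) (hu1 : u < 2 * pi) (hv0 : 0 <= v) (hv1 : v < pi)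
  (sA sB : 'M[R[i]]_2)
  (hAd : is_diag_mx sA) (hAh : herm sA)
  (hBd : is_diag_mx sB) (hBh : herm sB) :
  psd (CQ R - sA *t id2 R - id2 R *t sB) ->
  psd (CQ R - PhiStar u v sA *t id2 R - id2 R *t PhiStar u v sB).
Proof.
have cos2_01 (x : R) : 0 <= cos x ^+ 2 <= 1.
  by rewrite sqr_ge0 cos2sin2 lerBlDr lerDl sqr_ge0.
rewrite (diag_mx2 hAd) (diag_mx2 hBd) => Fpsd.
rewrite !PhiStar_diag2 !sin2cos2.
by apply: (psd_Fmx_mix (cos2_01 _) (cos2_01 _) _ _ _ _ Fpsd); apply: herm_conj_diag.
Qed.
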